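(* Let $G$ be a groupoid object in a tangent category $\mathcal C$ and $r:E\to G_0$ a differentiable right $G$-bundle. Then for every $n\ge0$ the higher vertical tangent bundle $r_{V^{[n]}E}:V^{[n]}E\to G_0$ together with the morphism $\beta_{V^{[n]}E}$ is a right $G$-bundle.
   Context: Tangent category (Rosický, with negatives): a category with an endofunctor $T$ and natural transformations $\pi:T\Rightarrow\mathrm{id}$, $0:\mathrm{id}\Rightarrow T$, $+$, $\lambda$, $\tau$ satisfying Rosický's axioms; in particular $\pi\circ0=\mathrm{id}$. Write $0^{[n]}_X=T^{n-1}0_X\circ\cdots\circ T0_X\circ0_X:X\to T^nX$ (iterated zero section, $0^{[0]}_X=\mathrm{id}$) and $0_{(m),X}=(0_X,\dots,0_X):X\to T_mX$, where $T_mX$ is the $m$-fold fiber product of $\pi_X$. Groupoid object $G=(G_0,G_1,s,t,1,i,m)$ with iterated fiber products $G_k$ of composable arrows existing and usual axioms; $t_k=t\circ\mathrm{pr}_1$, $t_0=\mathrm{id}$. $G$ is differentiable if for all $n\ge1,m\ge2,k\ge0$ the pullbacks $T^nG_1\times^{T^ns,T^nt_k}_{T^nG_0}T^nG_k$, $T^nG_1\times^{T^ns,0^{[n]}_{G_0}\circ t_k}_{T^nG_0}G_k$, $T_mG_1\times^{T_ms,0_{(m),G_0}\circ t_k}_{T_mG_0}G_k$, $G_0\times^{1,\pi_{G_1}\circ\mathrm{pr}_1}_{G_1}(TG_1\times^{Ts,0_{G_0}}_{TG_0}G_0)$ exist and $T^n(G_1\times^{s,t_k}_{G_0}G_k)\to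 T^nG_1\times_{T^nG_0}T^nG_k$ is an isomorphism. (Then $T^nG$ with the tangent structure maps is again a groupoid object.) Right $G$-bundle: $r:E\to G_0$ with $E\times^{r,t_k}_{G_0}G_k$ existing, and $\beta_E:E\times^{r,t}_{G_0}G_1\to E$ with $r\circ\beta_E=s\circ\mathrm{pr}_2$, unital, associative. Differentiable: $G$ differentiable, for all $n\ge1,m\ge2,k\ge0$ the pullbacks $T^nE\times^{T^nr,T^nt_k}_{T^nG_0}T^nG_k$, $T^nE\times^{T^nr,0^{[n]}_{G_0}\circ t_k}_{T^nG_0}G_k$, $T_mE\times^{T_mr,0_{(m),G_0}\circ t_k}_{T_mG_0}G_k$ exist and $\nu_{n,k}:T^n(E\times^{r,t_k}_{G_0}G_k)\to T^nE\times_{T^nG_0}T^nG_k$ is an isomorphism. Then $\beta_{T^nE}=T^n\beta_E\circ\nu_{n,1}^{-1}$ is a $T^nG$-action on $T^nr:T^nE\to T^nG_0$. $V^{[n]}E=T^nE\times^{T^nr,0^{[n]}_{G_0}}_{T^nG_0}G_0$ with projections $i_{V^{[n]}E}:V^{[n]}E\to T^nE$ and $r_{V^{[n]}E}:V^{[n]}E\to G_0$. By differentiability $V^{[n]}E\times_{G_0}G_k\cong T^nE\times^{T^nr,0^{[n]}_{G_0}\circ t_k}_{T^nG_0}G_k$ exists, and $\beta_{V^{[n]}E}:V^{[n]}E\times^{r_{V^{[n]}E},t}_{G_0}G_1\to V^{[n]}E$ is the morphism induced by the universal property of $V^{[n]}E$, i.e. the unique one with $i_{V^{[n]}E}\circ\beta_{V^{[n]}E}=\beta_{T^nE}\circ(i_{V^{[n]}E}\times_{0^{[n]}_{G_0}}0^{[n]}_{G_1})$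 and $r_{V^{[n]}E}\circ\beta_{V^{[n]}E}=s\circ\mathrm{pr}_2$. *)

(* Equality of morphisms is Leibniz. *)
From Stdlib Require Import Arith.

Record Category := {
  Ob :> Type;
  Hom : Ob -> Ob -> Type;
  idm : forall A, Hom A A;
  comp : forall A B D, Hom B D -> Hom A B -> Hom A D;
  comp_idl : forall A B (f : Hom A B), comp A B B (idm B) f = f;
  comp_idr : forall A B (f : Hom A B), comp A A B f (idm A) = f;
  comp_assoc : forall A B D F (h : Hom D F) (g : Hom B D) (f : Hom A B),
      comp A D F h (comp A B D g f) = comp A B F (comp B D F h g) f
}.
Arguments Hom {c} _ _.
Arguments idm {c} _.
Arguments comp {c A B D} _ _.
Notation "g ∘ f" := (comp g f) (at level 40, left associativity).

Definition is_iso {C : Category} {A B : C} (f : Hom A B) : Prop :=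
  exists g : Hom B A, g ∘ f = idm A /\ f ∘ g = idm B.

Definition is_pullback {C : Category} {A B D P : C}
    (p1 : Hom P A) (p2 : Hom P B) (f : Hom A D) (g : Hom B D) : Prop :=
  f ∘ p1 = g ∘ p2 /\
  forall (X : C) (x1 : Hom X A) (x2 : Hom X B), f ∘ x1 = g ∘ x2 ->
    exists u : Hom X P, p1 ∘ u = x1 /\ p2 ∘ u = x2 /\
      forall v : Hom X P, p1 ∘ v = x1 -> p2 ∘ v = x2 -> v = u.

Definition has_pullback {C : Category} {A B D : C}
    (f : Hom A D) (g : Hom B D) : Prop :=
  exists (P : C) (p1 : Hom P A) (p2 : Hom P B), is_pullback p1 p2 f g.

Definition is_fiber_power {C : Category} (m : nat) {A D P : C}
    (p : nat -> Hom P A) (f : Hom A D) : Prop :=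
  (forall i j, i < m -> j < m -> f ∘ p i = f ∘ p j) /\
  forall (X : C) (x : nat -> Hom X A),
    (forall i j, i < m -> j < m -> f ∘ x i = f ∘ x j) ->
    exists u : Hom X P, (forall i, i < m -> p i ∘ u = x i) /\
      forall v : Hom X P, (forall i, i < m -> p i ∘ v = x i) -> v = u.

Record TangentData (C : Category) := {
  T : C -> C;
  Tm : forall A B : C, Hom A B -> Hom (T A) (T B);
  tp : forall A : C, Hom (T A) A;
  tz : forall A : C, Hom A (T A);
  T2 : C -> C;
  T2p1 : forall A : C, Hom (T2 A) (T A);
  T2p2 : forall A : C, Hom (T2 A) (T A);
  tplus : forall A : C, Hom (T2 A) (T A);
  tlam : forall A : C, Hom (T A) (T (T A));
  tc : forall A : C, Hom (T (T A)) (T (T A));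
  tneg : forall A : C, Hom (T A) (T A)
}.
Arguments T {C} _ _.
Arguments Tm {C} _ {A B} _.
Arguments tp {C} _ _.
Arguments tz {C} _ _.
Arguments T2 {C} _ _.
Arguments T2p1 {C} _ _.
Arguments T2p2 {C} _ _.
Arguments tplus {C} _ _.
Arguments tlam {C} _ _.
Arguments tc {C} _ _.
Arguments tneg {C} _ _.

Fixpoint Tn {C : Category} (TD : TangentData C) (n : nat) (A : C) : C :=
  match n with 0 => A | S k => Tn TD k (T TD A) end.

Fixpoint Tnm {C : Category} (TD : TangentData C) (n : nat) :
    forall A B : C, Hom A B -> Hom (Tn TD n A) (Tn TD n B) :=
  match n with
  | 0 => fun A B f => f
  | S k => fun A B f => Tnm TD k (T TD A) (T TD B) (Tm TD f)
  end.
Arguments Tnm {C} TD n {A B} _.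

Fixpoint zn {C : Category} (TD : TangentData C) (n : nat) (A : C) :
    Hom A (Tn TD n A) :=
  match n with
  | 0 => idm A
  | S k => Tnm TD k (tz TD A) ∘ zn TD k A
  end.

Definition is_sum {C : Category} (TD : TangentData C) {A X : C}
    (a b c : Hom X (T TD A)) : Prop :=
  exists u : Hom X (T2 TD A),
    T2p1 TD A ∘ u = a /\ T2p2 TD A ∘ u = b /\ c = tplus TD A ∘ u.

Record is_tangent {C : Category} (TD : TangentData C) : Prop := {
  T_id : forall A : C, Tm TD (idm A) = idm (T TD A);
  T_comp : forall (A B D : C) (g : Hom B D) (f : Hom A B),
      Tm TD (g ∘ f) = Tm TD g ∘ Tm TD f;
  tp_nat : forall (A B : C) (f : Hom A B), tp TD B ∘ Tm TD f = f ∘ tp TD A;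
  tz_nat : forall (A B : C) (f : Hom A B), Tm TD f ∘ tz TD A = tz TD B ∘ f;
  tplus_nat : forall (A B : C) (f : Hom A B) (u : Hom (T2 TD A) (T2 TD B)),
      T2p1 TD B ∘ u = Tm TD f ∘ T2p1 TD A ->
      T2p2 TD B ∘ u = Tm TD f ∘ T2p2 TD A ->
      tplus TD B ∘ u = Tm TD f ∘ tplus TD A;
  tlam_nat : forall (A B : C) (f : Hom A B),
      tlam TD B ∘ Tm TD f = Tm TD (Tm TD f) ∘ tlam TD A;
  tc_nat : forall (A B : C) (f : Hom A B),
      tc TD B ∘ Tm TD (Tm TD f) = Tm TD (Tm TD f) ∘ tc TD A;
  tneg_nat : forall (A B : C) (f : Hom A B),
      tneg TD B ∘ Tm TD f = Tm TD f ∘ tneg TD A;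
  T2_pullback : forall A : C, is_pullback (T2p1 TD A) (T2p2 TD A) (tp TD A) (tp TD A);
  Tm_exist : forall (m : nat) (A : C), 1 <= m ->
      exists (P : C) (p : nat -> Hom P (T TD A)), is_fiber_power m p (tp TD A);
  Tm_preserved : forall (n m : nat) (A P : C) (p : nat -> Hom P (T TD A)),
      1 <= m -> is_fiber_power m p (tp TD A) ->
      is_fiber_power m (fun i => Tnm TD n (p i)) (Tnm TD n (tp TD A));
  tp_tz : forall A : C, tp TD A ∘ tz TD A = idm A;
  tp_tplus : forall A : C, tp TD A ∘ tplus TD A = tp TD A ∘ T2p1 TD A;
  tplus_assoc : forall (A X : C) (a b c ab bc x y : Hom X (T TD A)),
      is_sum TD a b ab -> is_sum TD ab c x ->
      is_sum TD b c bc -> is_sum TD a bc y -> x = y;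
  tplus_unit : forall (A X : C) (a : Hom X (T TD A)) (u : Hom X (T2 TD A)),
      T2p1 TD A ∘ u = a -> T2p2 TD A ∘ u = tz TD A ∘ tp TD A ∘ a ->
      tplus TD A ∘ u = a;
  tplus_comm : forall (A X : C) (a b c : Hom X (T TD A)),
      is_sum TD a b c -> is_sum TD b a c;
  tp_tneg : forall A : C, tp TD A ∘ tneg TD A = tp TD A;
  tneg_inv : forall (A : C) (u : Hom (T TD A) (T2 TD A)),
      T2p1 TD A ∘ u = idm (T TD A) -> T2p2 TD A ∘ u = tneg TD A ->
      tplus TD A ∘ u = tz TD A ∘ tp TD A;
  tlam_tp : forall A : C, Tm TD (tp TD A) ∘ tlam TD A = tz TD A ∘ tp TD A;
  tlam_tz : forall A : C, tlam TD A ∘ tz TD A = Tm TD (tz TD A) ∘ tz TD A;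
  tlam_tplus : forall (A : C) (w : Hom (T2 TD A) (T TD (T2 TD A))),
      Tm TD (T2p1 TD A) ∘ w = tlam TD A ∘ T2p1 TD A ->
      Tm TD (T2p2 TD A) ∘ w = tlam TD A ∘ T2p2 TD A ->
      tlam TD A ∘ tplus TD A = Tm TD (tplus TD A) ∘ w;
  tc_tp : forall A : C, tp TD (T TD A) ∘ tc TD A = Tm TD (tp TD A);
  tc_tz : forall A : C, tc TD A ∘ Tm TD (tz TD A) = tz TD (T TD A);
  tc_tplus : forall (A : C) (u : Hom (T TD (T2 TD A)) (T2 TD (T TD A))),
      T2p1 TD (T TD A) ∘ u = tc TD A ∘ Tm TD (T2p1 TD A) ->
      T2p2 TD (T TD A) ∘ u = tc TD A ∘ Tm TD (T2p2 TD A) ->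
      tc TD A ∘ Tm TD (tplus TD A) = tplus TD (T TD A) ∘ u;
  tc_invol : forall A : C, tc TD A ∘ tc TD A = idm (T TD (T TD A));
  tc_tlam : forall A : C, tc TD A ∘ tlam TD A = tlam TD A;
  tlam_tlam : forall A : C,
      Tm TD (tlam TD A) ∘ tlam TD A = tlam TD (T TD A) ∘ tlam TD A;
  tc_yb : forall A : C,
      tc TD (T TD A) ∘ Tm TD (tc TD A) ∘ tc TD (T TD A)
      = Tm TD (tc TD A) ∘ tc TD (T TD A) ∘ Tm TD (tc TD A);
  tc_tlam_coh : forall A : C,
      Tm TD (tc TD A) ∘ tc TD (T TD A) ∘ Tm TD (tlam TD A)
      = tlam TD (T TD A) ∘ tc TD A;
  (* universality of the vertical lift: with mu = T(+) o <lambda pr1, 0_T pr2>,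
     the square  T_2 A --mu--> T^2 A, T_2 A --pi pr1--> A, T pi, 0
     is a pullback, preserved by every T^n *)
  tlam_universal : forall (A : C) (v : Hom (T2 TD A) (T TD (T2 TD A))),
      Tm TD (T2p1 TD A) ∘ v = tlam TD A ∘ T2p1 TD A ->
      Tm TD (T2p2 TD A) ∘ v = tz TD (T TD A) ∘ T2p2 TD A ->
      forall n : nat,
        is_pullback (Tnm TD n (Tm TD (tplus TD A) ∘ v))
                    (Tnm TD n (tp TD A ∘ T2p1 TD A))
                    (Tnm TD n (Tm TD (tp TD A))) (Tnm TD n (tz TD A))
}.

(* G_0 = G0, G_1 = G1, G_(k+2) = Gss k := G1 x_{s, t_(k+1)} G_(k+1) *)
Definition Gk_of {C : Category} (G0 G1 : C) (Gss : nat -> C) (k : nat) : C :=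
  match k with 0 => G0 | 1 => G1 | S (S j) => Gss j end.

Record GroupoidData (C : Category) := {
  G0 : C;
  G1 : C;
  gs : Hom G1 G0;
  gt : Hom G1 G0;
  ge : Hom G0 G1;
  ginv : Hom G1 G1;
  Gss : nat -> C;
  prA : forall k, Hom (Gss k) G1;
  prB : forall k, Hom (Gss k) (Gk_of G0 G1 Gss (S k));
  gm : Hom (Gss 0) G1
}.
Arguments G0 {C} _.
Arguments G1 {C} _.
Arguments gs {C} _.
Arguments gt {C} _.
Arguments ge {C} _.
Arguments ginv {C} _.
Arguments Gss {C} _ _.
Arguments prA {C} _ _.
Arguments prB {C} _ _.
Arguments gm {C} _.

Definition Gk {C : Category} (G : GroupoidData C) (k : nat) : C :=
  Gk_of (G0 G) (G1 G) (Gss G) k.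

Definition tk {C : Category} (G : GroupoidData C) (k : nat) : Hom (Gk G k) (G0 G) :=
  match k as k0 return Hom (Gk G k0) (G0 G) with
  | 0 => idm (G0 G)
  | 1 => gt G
  | S (S j) => gt G ∘ prA G j
  end.

Definition is_mul {C : Category} (G : GroupoidData C) {X : C}
    (a b c : Hom X (G1 G)) : Prop :=
  exists w : Hom X (Gss G 0), prA G 0 ∘ w = a /\ prB G 0 ∘ w = b /\ c = gm G ∘ w.

Record is_groupoid {C : Category} (G : GroupoidData C) : Prop := {
  G_pullbacks : forall k : nat,
      is_pullback (prA G k) (prB G k) (gs G) (tk G (S k));
  gs_ge : gs G ∘ ge G = idm (G0 G);
  gt_ge : gt G ∘ ge G = idm (G0 G);
  gs_gm : gs G ∘ gm G = gs G ∘ prB G 0;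
  gt_gm : gt G ∘ gm G = gt G ∘ prA G 0;
  gm_assoc : forall (X : C) (a b c ab bc x y : Hom X (G1 G)),
      is_mul G a b ab -> is_mul G ab c x ->
      is_mul G b c bc -> is_mul G a bc y -> x = y;
  gm_unit_r : forall (X : C) (a : Hom X (G1 G)) (w : Hom X (Gss G 0)),
      prA G 0 ∘ w = a -> prB G 0 ∘ w = ge G ∘ gs G ∘ a -> gm G ∘ w = a;
  gm_unit_l : forall (X : C) (a : Hom X (G1 G)) (w : Hom X (Gss G 0)),
      prA G 0 ∘ w = ge G ∘ gt G ∘ a -> prB G 0 ∘ w = a -> gm G ∘ w = a;
  gs_ginv : gs G ∘ ginv G = gt G;
  gt_ginv : gt G ∘ ginv G = gs G;
  gm_inv_r : forall (X : C) (a : Hom X (G1 G)) (w : Hom X (Gss G 0)),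
      prA G 0 ∘ w = a -> prB G 0 ∘ w = ginv G ∘ a -> gm G ∘ w = ge G ∘ gt G ∘ a;
  gm_inv_l : forall (X : C) (a : Hom X (G1 G)) (w : Hom X (Gss G 0)),
      prA G 0 ∘ w = ginv G ∘ a -> prB G 0 ∘ w = a -> gm G ∘ w = ge G ∘ gs G ∘ a
}.

(* Differentiability (for an object M over G0 via q : M -> G0; used with
   M = G1, q = s for the groupoid and M = E, q = r for bundles)       *)
Definition differentiable_over {C : Category} (TD : TangentData C)
    (G : GroupoidData C) {M : C} (q : Hom M (G0 G)) : Prop :=
  forall (n m k : nat), 1 <= n -> 2 <= m ->
    has_pullback (Tnm TD n q) (Tnm TD n (tk G k)) /\
    has_pullback (Tnm TD n q) (zn TD n (G0 G) ∘ tk G k) /\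
    (forall (P Q : C) (p : nat -> Hom P (T TD M)) (pq : nat -> Hom Q (T TD (G0 G)))
            (Tmq : Hom P Q) (z0 : Hom (G0 G) Q),
        is_fiber_power m p (tp TD M) -> is_fiber_power m pq (tp TD (G0 G)) ->
        (forall i, i < m -> pq i ∘ Tmq = Tm TD q ∘ p i) ->
        (forall i, i < m -> pq i ∘ z0 = tz TD (G0 G)) ->
        has_pullback Tmq (z0 ∘ tk G k)) /\
    (forall (P : C) (p1 : Hom P M) (p2 : Hom P (Gk G k)),
        is_pullback p1 p2 q (tk G k) ->
        forall (Q : C) (q1 : Hom Q (Tn TD n M)) (q2 : Hom Q (Tn TD n (Gk G k))),
        is_pullback q1 q2 (Tnm TD n q) (Tnm TD n (tk G k)) ->
        forall nu : Hom (Tn TD n P) Q,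
        q1 ∘ nu = Tnm TD n p1 -> q2 ∘ nu = Tnm TD n p2 -> is_iso nu).

Definition differentiable_groupoid {C : Category} (TD : TangentData C)
    (G : GroupoidData C) : Prop :=
  differentiable_over TD G (gs G) /\
  (forall (P : C) (p1 : Hom P (T TD (G1 G))) (p2 : Hom P (G0 G)),
      is_pullback p1 p2 (Tm TD (gs G)) (tz TD (G0 G)) ->
      has_pullback (ge G) (tp TD (G1 G) ∘ p1)).

Definition is_act {C : Category} {E EG X : C} (pE : Hom EG E) {G1' : C}
    (pG : Hom EG G1') (b : Hom EG E) (x : Hom X E) (g : Hom X G1') (y : Hom X E) : Prop :=
  exists w : Hom X EG, pE ∘ w = x /\ pG ∘ w = g /\ y = b ∘ w.

(* r : E -> G0 with action b : E x_{r,t} G1 -> E, where (EG, pE, pG) is the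
   (chosen) pullback E x_{r,t} G1 *)
Definition is_right_bundle {C : Category} (G : GroupoidData C) {E EG : C}
    (r : Hom E (G0 G)) (pE : Hom EG E) (pG : Hom EG (G1 G)) (b : Hom EG E) : Prop :=
  is_pullback pE pG r (gt G) /\
  (forall k : nat, has_pullback r (tk G k)) /\
  r ∘ b = gs G ∘ pG /\
  (forall (X : C) (x : Hom X E) (w : Hom X EG),
      pE ∘ w = x -> pG ∘ w = ge G ∘ r ∘ x -> b ∘ w = x) /\
  (forall (X : C) (x y z z' : Hom X E) (g h gh : Hom X (G1 G)),
      is_act pE pG b x g y -> is_act pE pG b y h z ->
      is_mul G g h gh -> is_act pE pG b x gh z' -> z = z').

Definition differentiable_bundle {C : Category} (TD : TangentData C)
    (G : GroupoidData C) {E : C} (r : Hom E (G0 G)) : Prop :=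
  differentiable_groupoid TD G /\ differentiable_over TD G r.

From Stdlib Require Import Lia.

(* The zero section 0^[n] is natural, so a point of the vertical bundle V^[n]E paired with an
   arrow of G is, under i_V x 0^[n], the image of a genuine point of T^n(E x G_1); there
   beta_{V^[n]E} is T^n beta_E.  Unitality and associativity of beta_E, stated once for the
   generic composable configuration E x_{r,t_2} G_2, are transported along T^n, and
   differentiability (nu_{n,2} is invertible) lifts any vertical configuration to T^n of that
   generic one. *)

Section Pullbacks.
Context {C : Category}.

Lemma pullback_ext {A B D P X : C} (p1 : Hom P A) (p2 : Hom P B) (f : Hom A D) (g : Hom B D)
    (HP : is_pullback p1 p2 f g) (u v : Hom X P) :
  p1 ∘ u = p1 ∘ v -> p2 ∘ u = p2 ∘ v -> u = v.
Proof.
  intros e1 e2; destruct HP as [Hsq Huniv].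
  assert (Hv : f ∘ (p1 ∘ v) = g ∘ (p2 ∘ v)) by (rewrite !comp_assoc, Hsq; reflexivity).
  destruct (Huniv X _ _ Hv) as [m [_ [_ Hm]]].
  rewrite (Hm u e1 e2), (Hm v eq_refl eq_refl); reflexivity.
Qed.

Lemma has_pullback_pasting {A B D K P V : C} (f : Hom A D) (g : Hom B D) (h : Hom K B)
    (iV : Hom V A) (rV : Hom V B) (HV : is_pullback iV rV f g)
    (p1 : Hom P A) (p2 : Hom P K) (HP : is_pullback p1 p2 f (g ∘ h)) :
  has_pullback rV h.
Proof.
  destruct HP as [Psq Puniv]; pose proof HV as [Vsq Vuniv].
  destruct (Vuniv P p1 (h ∘ p2)) as [u [u1 [u2 _]]].
  { rewrite Psq, comp_assoc; reflexivity. }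
  exists P, u, p2; split; [exact u2|].
  intros X x1 x2 Hx.
  assert (Hx' : f ∘ (iV ∘ x1) = (g ∘ h) ∘ x2).
  { rewrite comp_assoc, Vsq, <- comp_assoc, Hx, comp_assoc; reflexivity. }
  destruct (Puniv X _ _ Hx') as [v [v1 [v2 Hv]]].
  exists v; split; [|split; [exact v2|]].
  - apply (pullback_ext iV rV f g HV).
    + rewrite comp_assoc, u1; exact v1.
    + rewrite comp_assoc, u2, <- comp_assoc, v2; symmetry; exact Hx.
  - intros v' e1 e2; apply Hv; [|exact e2].
    rewrite <- u1, <- comp_assoc, e1; reflexivity.
Qed.

End Pullbacks.

Section Iterates.
Context {C : Category} {TD : TangentData C} (HT : is_tangent TD).

Lemma Tnm_comp n : forall (A B D : C) (g : Hom B D) (f : Hom A B),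
  Tnm TD n (g ∘ f) = Tnm TD n g ∘ Tnm TD n f.
Proof. induction n; intros; simpl; [reflexivity|]; rewrite (T_comp _ HT); apply IHn. Qed.

Lemma Tnm_id n : forall A : C, Tnm TD n (idm A) = idm (Tn TD n A).
Proof. induction n; intros; simpl; [reflexivity|]; rewrite (T_id _ HT); apply IHn. Qed.

Lemma zn_nat n : forall (A B : C) (f : Hom A B), Tnm TD n f ∘ zn TD n A = zn TD n B ∘ f.
Proof.
  induction n; intros; simpl.
  - rewrite comp_idl, comp_idr; reflexivity.
  - rewrite comp_assoc, <- Tnm_comp, (tz_nat _ HT), Tnm_comp, <- comp_assoc, IHn, comp_assoc.
    reflexivity.
Qed.

Lemma differentiable_pullback_lift {G : GroupoidData C} {M : C} (q : Hom M (G0 G))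
    (Hq : differentiable_over TD G q) (n k : nat)
    {P : C} (p1 : Hom P M) (p2 : Hom P (Gk G k)) (HP : is_pullback p1 p2 q (tk G k))
    {X : C} (x1 : Hom X (Tn TD n M)) (x2 : Hom X (Tn TD n (Gk G k))) :
  Tnm TD n q ∘ x1 = Tnm TD n (tk G k) ∘ x2 ->
  exists e : Hom X (Tn TD n P), Tnm TD n p1 ∘ e = x1 /\ Tnm TD n p2 ∘ e = x2.
Proof.
  intro Hx; destruct n as [|n'].
  - destruct (proj2 HP X x1 x2 Hx) as [e [e1 [e2 _]]]; exists e; auto.
  - destruct (Hq (S n') 2 k ltac:(lia) ltac:(lia)) as [[R [r1 [r2 HR]]] [_ [_ Hnu]]].
    destruct (proj2 HR _ (Tnm TD (S n') p1) (Tnm TD (S n') p2)) as [nu [nu1 [nu2 _]]].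
    { rewrite <- !Tnm_comp; f_equal; exact (proj1 HP). }
    destruct (Hnu P p1 p2 HP R r1 r2 HR nu nu1 nu2) as [nu_inv [_ Hsect]].
    destruct (proj2 HR X x1 x2 Hx) as [u [u1 [u2 _]]].
    exists (nu_inv ∘ u); split.
    + rewrite <- nu1, <- comp_assoc, (comp_assoc _ _ _ _ _ nu), Hsect, comp_idl; exact u1.
    + rewrite <- nu2, <- comp_assoc, (comp_assoc _ _ _ _ _ nu), Hsect, comp_idl; exact u2.
Qed.

End Iterates.

Lemma vertical_has_pullbacks {C : Category} {TD : TangentData C} {G : GroupoidData C}
    {E : C} (r : Hom E (G0 G)) (Hr : differentiable_over TD G r)
    (Hrk : forall k, has_pullback r (tk G k)) (n : nat)
    {V : C} (iV : Hom V (Tn TD n E)) (rV : Hom V (G0 G))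
    (HV : is_pullback iV rV (Tnm TD n r) (zn TD n (G0 G))) (k : nat) :
  has_pullback rV (tk G k).
Proof.
  assert (Hk : has_pullback (Tnm TD n r) (zn TD n (G0 G) ∘ tk G k)).
  { destruct n as [|n'].
    - simpl; rewrite comp_idl; apply Hrk.
    - exact (proj1 (proj2 (Hr (S n') 2 k ltac:(lia) ltac:(lia)))). }
  destruct Hk as [P [p1 [p2 HP]]].
  exact (has_pullback_pasting _ _ _ iV rV HV p1 p2 HP).
Qed.

Section RightBundles.
Context {C : Category} {G : GroupoidData C} (HG : is_groupoid G)
  {E EG : C} {r : Hom E (G0 G)} {pE : Hom EG E} {pG : Hom EG (G1 G)} {bE : Hom EG E}
  (HE : is_right_bundle G r pE pG bE).

Lemma right_bundle_unit_section :
  exists s : Hom E EG, pE ∘ s = idm E /\ pG ∘ s = ge G ∘ r /\ bE ∘ s = idm E.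
Proof.
  destruct HE as [[_ Huniv] [_ [_ [Hunit _]]]].
  destruct (Huniv E (idm E) (ge G ∘ r)) as [s [s1 [s2 _]]].
  { rewrite comp_idr, comp_assoc, (gt_ge _ HG), comp_idl; reflexivity. }
  exists s; repeat split; auto.
  apply (Hunit E (idm E) s s1); rewrite s2, comp_idr; reflexivity.
Qed.

(* A1, A2, A3 are the points (e, g), (e g, h), (e, g h) of E x_{r,t} G_1 over the generic
   configuration (e, g, h) of E x_{r,t_2} G_2. *)
Lemma right_bundle_assoc_generic {P : C} (p1 : Hom P E) (p2 : Hom P (Gss G 0))
    (HP : is_pullback p1 p2 r (tk G 2)) :
  exists A1 A2 A3 : Hom P EG,
    pE ∘ A1 = p1 /\ pG ∘ A1 = prA G 0 ∘ p2 /\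
    pE ∘ A2 = bE ∘ A1 /\ pG ∘ A2 = prB G 0 ∘ p2 /\
    pE ∘ A3 = p1 /\ pG ∘ A3 = gm G ∘ p2 /\
    bE ∘ A2 = bE ∘ A3.
Proof.
  destruct HE as [[_ Huniv] [_ [HrbE [_ Hassoc]]]].
  assert (H1 : r ∘ p1 = gt G ∘ (prA G 0 ∘ p2)) by (rewrite comp_assoc; exact (proj1 HP)).
  destruct (Huniv P _ _ H1) as [A1 [A11 [A12 _]]].
  assert (H2 : r ∘ (bE ∘ A1) = gt G ∘ (prB G 0 ∘ p2)).
  { rewrite comp_assoc, HrbE, <- comp_assoc, A12, comp_assoc,
      (proj1 (G_pullbacks _ HG 0)), <- comp_assoc; reflexivity. }
  destruct (Huniv P _ _ H2) as [A2 [A21 [A22 _]]].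
  assert (H3 : r ∘ p1 = gt G ∘ (gm G ∘ p2)).
  { rewrite comp_assoc, (gt_gm _ HG), <- comp_assoc; exact H1. }
  destruct (Huniv P _ _ H3) as [A3 [A31 [A32 _]]].
  exists A1, A2, A3; repeat split; auto.
  apply (Hassoc P p1 (bE ∘ A1) (bE ∘ A2) (bE ∘ A3)
           (prA G 0 ∘ p2) (prB G 0 ∘ p2) (gm G ∘ p2));
    [exists A1 | exists A2 | exists p2 | exists A3]; auto.
Qed.

End RightBundles.

Section VerticalAction.
Context {C : Category} {TD : TangentData C} (HT : is_tangent TD) {G : GroupoidData C}
  {E EG : C} {r : Hom E (G0 G)} {pE : Hom EG E} {pG : Hom EG (G1 G)} {bE : Hom EG E}
  {n : nat} {V : C} {iV : Hom V (Tn TD n E)} {rV : Hom V (G0 G)}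
  (HV : is_pullback iV rV (Tnm TD n r) (zn TD n (G0 G)))
  {Q : C} {q1 : Hom Q (Tn TD n E)} {q2 : Hom Q (Tn TD n (G1 G))}
  (HQ : is_pullback q1 q2 (Tnm TD n r) (Tnm TD n (gt G)))
  {nu : Hom (Tn TD n EG) Q} (Hnu1 : q1 ∘ nu = Tnm TD n pE) (Hnu2 : q2 ∘ nu = Tnm TD n pG)
  {bT : Hom Q (Tn TD n E)} (HbT : bT ∘ nu = Tnm TD n bE)
  {VG : C} {pV : Hom VG V} {pVG : Hom VG (G1 G)} (HVG : is_pullback pV pVG rV (gt G))
  {w : Hom VG Q}
  (Hw1 : q1 ∘ w = iV ∘ pV) (Hw2 : q2 ∘ w = zn TD n (G1 G) ∘ pVG)
  {bV : Hom VG V} (HbV1 : iV ∘ bV = bT ∘ w) (HbV2 : rV ∘ bV = gs G ∘ pVG).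

Lemma vertical_action_lift {X P : C} (A : Hom P EG) (e : Hom X (Tn TD n P)) (v : Hom X VG) :
  iV ∘ (pV ∘ v) = Tnm TD n (pE ∘ A) ∘ e ->
  zn TD n (G1 G) ∘ (pVG ∘ v) = Tnm TD n (pG ∘ A) ∘ e ->
  iV ∘ (bV ∘ v) = Tnm TD n (bE ∘ A) ∘ e.
Proof.
  intros Hv1 Hv2.
  assert (Hwv : w ∘ v = nu ∘ (Tnm TD n A ∘ e)).
  { apply (pullback_ext q1 q2 _ _ HQ).
    - rewrite !comp_assoc, Hw1, Hnu1, <- (Tnm_comp HT), <- comp_assoc; exact Hv1.
    - rewrite !comp_assoc, Hw2, Hnu2, <- (Tnm_comp HT), <- comp_assoc; exact Hv2. }
  rewrite comp_assoc, HbV1, <- comp_assoc, Hwv, comp_assoc, HbT, comp_assoc, (Tnm_comp HT).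
  reflexivity.
Qed.

Lemma zn_after_lift {X P K L : C} (f : Hom K L) (p2 : Hom P K)
    (e : Hom X (Tn TD n P)) (y : Hom X K) :
  Tnm TD n p2 ∘ e = zn TD n K ∘ y -> zn TD n L ∘ (f ∘ y) = Tnm TD n (f ∘ p2) ∘ e.
Proof.
  intro He; rewrite (Tnm_comp HT), <- comp_assoc, He, !comp_assoc, (zn_nat HT); reflexivity.
Qed.

Lemma vertical_action_unit (HG : is_groupoid G) (HE : is_right_bundle G r pE pG bE) :
  forall (X : C) (x : Hom X V) (v : Hom X VG),
    pV ∘ v = x -> pVG ∘ v = ge G ∘ rV ∘ x -> bV ∘ v = x.
Proof.
  intros X x v Hv1 Hv2.
  destruct (right_bundle_unit_section HG HE) as [s [s1 [s2 s3]]].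
  apply (pullback_ext iV rV _ _ HV).
  - rewrite (vertical_action_lift s (iV ∘ x) v), s3, (Tnm_id HT), comp_idl; [reflexivity|..].
    + rewrite Hv1, s1, (Tnm_id HT), comp_idl; reflexivity.
    + rewrite Hv2, s2, <- comp_assoc; apply zn_after_lift.
      rewrite comp_assoc, (proj1 HV), comp_assoc; reflexivity.
  - rewrite comp_assoc, HbV2, <- comp_assoc, Hv2, !comp_assoc, (gs_ge _ HG), comp_idl.
    reflexivity.
Qed.

Lemma vertical_action_assoc (HG : is_groupoid G) (HE : is_right_bundle G r pE pG bE)
    (Hr : differentiable_over TD G r) :
  forall (X : C) (x y z z' : Hom X V) (g h gh : Hom X (G1 G)),
    is_act pV pVG bV x g y -> is_act pV pVG bV y h z ->
    is_mul G g h gh -> is_act pV pVG bV x gh z' -> z = z'.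
Proof.
  intros X x y z z' g h gh [w1 [a1 [a2 ->]]] [w2 [b1 [b2 ->]]] [p [c1 [c2 c3]]]
    [w3 [d1 [d2 ->]]].
  destruct (proj1 (proj2 HE) 2) as [P [p1 [p2 HP]]].
  change (Gk G 2) with (Gss G 0) in p2, HP.
  destruct (right_bundle_assoc_generic HG HE p1 p2 HP)
    as [A1 [A2 [A3 [A11 [A12 [A21 [A22 [A31 [A32 Hassoc]]]]]]]]].
  assert (Hx : rV ∘ x = tk G 2 ∘ p).
  { rewrite <- a1, comp_assoc, (proj1 HVG), <- comp_assoc, a2, <- c1, comp_assoc.
    reflexivity. }
  destruct (differentiable_pullback_lift HT r Hr n 2 p1 p2 HP (iV ∘ x) (zn TD n _ ∘ p))
    as [e [e1 e2]].
  { rewrite comp_assoc, (proj1 HV), comp_assoc, (zn_nat HT), <- !comp_assoc, Hx.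
    reflexivity. }
  assert (L1 : iV ∘ (bV ∘ w1) = Tnm TD n (bE ∘ A1) ∘ e).
  { apply vertical_action_lift.
    - rewrite a1, A11; symmetry; exact e1.
    - rewrite a2, A12, <- c1; apply zn_after_lift; exact e2. }
  assert (L2 : iV ∘ (bV ∘ w2) = Tnm TD n (bE ∘ A2) ∘ e).
  { apply vertical_action_lift.
    - rewrite b1, A21; exact L1.
    - rewrite b2, A22, <- c2; apply zn_after_lift; exact e2. }
  assert (L3 : iV ∘ (bV ∘ w3) = Tnm TD n (bE ∘ A3) ∘ e).
  { apply vertical_action_lift.
    - rewrite d1, A31; symmetry; exact e1.
    - rewrite d2, A32, c3; apply zn_after_lift; exact e2. }
  apply (pullback_ext iV rV _ _ HV).
  - rewrite L2, L3, Hassoc; reflexivity.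
  - rewrite !comp_assoc, !HbV2, <- !comp_assoc, b2, d2, c3, <- c2, !comp_assoc, (gs_gm _ HG).
    reflexivity.
Qed.

End VerticalAction.

Theorem mainTheorem8 (C : Category) (TD : TangentData C) (HT : is_tangent TD)
  (G : GroupoidData C) (HG : is_groupoid G)
  (E : C) (r : Hom E (G0 G))
  (EG : C) (pE : Hom EG E) (pG : Hom EG (G1 G)) (bE : Hom EG E)
  (HE : is_right_bundle G r pE pG bE)
  (Hdiff : differentiable_bundle TD G r)
  (n : nat)
  (V : C) (iV : Hom V (Tn TD n E)) (rV : Hom V (G0 G))
  (HV : is_pullback iV rV (Tnm TD n r) (zn TD n (G0 G)))
  (Q : C) (q1 : Hom Q (Tn TD n E)) (q2 : Hom Q (Tn TD n (G1 G)))
  (HQ : is_pullback q1 q2 (Tnm TD n r) (Tnm TD n (gt G)))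
  (nu : Hom (Tn TD n EG) Q)
  (Hnu1 : q1 ∘ nu = Tnm TD n pE) (Hnu2 : q2 ∘ nu = Tnm TD n pG)
  (bT : Hom Q (Tn TD n E)) (HbT : bT ∘ nu = Tnm TD n bE)
  (VG : C) (pV : Hom VG V) (pVG : Hom VG (G1 G))
  (HVG : is_pullback pV pVG rV (gt G))
  (w : Hom VG Q) (Hw1 : q1 ∘ w = iV ∘ pV) (Hw2 : q2 ∘ w = zn TD n (G1 G) ∘ pVG)
  (bV : Hom VG V) (HbV1 : iV ∘ bV = bT ∘ w) (HbV2 : rV ∘ bV = gs G ∘ pVG) :
  is_right_bundle G rV pV pVG bV.
Proof.
  destruct Hdiff as [_ Hr].
  refine (conj HVG (conj _ (conj HbV2 (conj _ _)))).
  - exact (vertical_has_pullbacks r Hr (proj1 (proj2 HE)) n iV rV HV).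
  - exact (vertical_action_unit HT HV HQ Hnu1 Hnu2 HbT Hw1 Hw2 HbV1 HbV2 HG HE).
  - exact (vertical_action_assoc HT HV HQ Hnu1 Hnu2 HbT HVG Hw1 Hw2 HbV1 HbV2 HG HE Hr).
Qed.
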